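(* Let $k\ge 5$ and let $G=(V,E)$ be the cycle graph of the cycle $C=(v_0,\ldots,v_{k-1})$, i.e. $V=V(C)$ and $E=\textnormal{ext}(C)$. Then the inequality $$\sum_{f\in\{\{v_i,v_j\}\in E^c:\ d_C(v_i,v_j)=2\}}x_f\ \ge\ 2$$ is valid and facet-defining for $\textnormal{conv}(X(G))$.
   Context: $\textnormal{ext}(C)=\{\{v_{i-1},v_i\}\}_{i=1}^{k-1}\cup\{\{v_{k-1},v_0\}\}$, $E^c=\binom{V}{2}\setminus E$. For $i<j$, $d_C(v_i,v_j)=\min\{j-i,\,k-j+i\}$, and $d_C(v_j,v_i)=d_C(v_i,v_j)$. For $x\in\{0,1\}^{E^c}$, $E(x)=\{f:x_f=1\}$ and $X(G)=\{x\in\{0,1\}^{E^c}:(V,E\cup E(x))\text{ is chordal}\}$; a graph is chordal if every cycle with at least four vertices has a chord. *)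

From mathcomp Require Import all_boot all_order all_algebra.
Set Implicit Arguments. Unset Strict Implicit. Unset Printing Implicit Defensive.
Import Order.TTheory GRing.Theory Num.Theory.

Definition cyc_adj (k : nat) (u v : 'I_k) : bool :=
  (v == (u.+1 %% k) :> nat) || (u == (v.+1 %% k) :> nat).

Definition dC (k : nat) (u v : 'I_k) : nat :=
  let d := if u <= v then v - u else u - v in minn d (k - d).

Definition EcSet (k : nat) : {set {set 'I_k}} :=
  [set e : {set 'I_k} | [exists u, exists v,
     [&& u != v, e == [set u; v] & ~~ cyc_adj u v]]].

Definition Ec (k : nat) := {e : {set 'I_k} | e \in EcSet k}.

(* Edge relation of (V, E ∪ E(x)) for x ∈ {0,1}^{E^c}. *)
Definition adjx (k : nat) (x : {ffun Ec k -> bool}) (u v : 'I_k) : bool :=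
  (u != v) && (cyc_adj u v || [exists f : Ec k, (val f == [set u; v]) && x f]).

(* A cycle is a duplicate-free sequence s (size >= 4) of vertices with
   consecutive entries (cyclically) adjacent; a chord is an edge between two
   vertices of the cycle that are not cyclically consecutive in it. *)
Definition chordal (T : finType) (adj : rel T) : Prop :=
  forall s : seq T, uniq s -> 4 <= size s -> cycle adj s ->
    exists u v, [/\ u \in s, v \in s, adj u v, v != next s u & u != next s v].

Section Poly.
Local Open Scope ring_scope.
Variable R : realFieldType.
Variable k : nat.
Local Notation pt := {ffun Ec k -> R}.

Definition XG : pt -> Prop := fun p =>
  exists x : {ffun Ec k -> bool},
    p = [ffun f => (x f)%:R] /\ chordal (adjx x).

Definition conv (S : pt -> Prop) : pt -> Prop := fun y =>
  exists n (lam : 'I_n -> R) (q : 'I_n -> pt),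
    [/\ forall i, S (q i), forall i, 0 <= lam i, \sum_i lam i = 1 &
        forall f, y f = \sum_i lam i * q i f].

Definition aff_indep n (q : 'I_n -> pt) : Prop :=
  forall mu : 'I_n -> R, \sum_i mu i = 0 -> (forall f, \sum_i mu i * q i f = 0) ->
    forall i, mu i = 0.

Definition has_dim (P : pt -> Prop) (d : nat) : Prop :=
  (exists q : 'I_d.+1 -> pt, (forall i, P (q i)) /\ aff_indep q) /\
  (forall q : 'I_d.+2 -> pt, (forall i, P (q i)) -> ~ aff_indep q).

Definition dist2 (f : Ec k) : bool :=
  [exists u, exists v, (val f == [set u; v]) && (dC u v == 2%N)].

Definition lhs (y : pt) : R := \sum_(f : Ec k | dist2 f) y f.

Definition valid_ineq (P : pt -> Prop) (a : pt -> R) (b : R) : Prop :=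
  forall y, P y -> b <= a y.

Definition facet_defining (P : pt -> Prop) (a : pt -> R) (b : R) : Prop :=
  valid_ineq P a b /\
  exists d, has_dim P d.+1 /\ has_dim (fun y => P y /\ a y = b) d.
End Poly.

(* In a chordal completion, a chord spanning an arc of C closes the arc into a
   cycle; a chord of that cycle spans a shorter subarc, so descending one reaches
   an ear {v_(c-1), v_(c+1)}, i.e. a chord with d_C = 2.  Applying this to the arc
   v_0 ... v_(k-1), and then to the arc starting just after the first ear's
   centre, gives two distinct ears, so the inequality is valid.

   conv X(G) is full-dimensional: the complete graph and the complete graph minus
   one chord are chordal, and their points are affinely independent.  On the face,
   the triangulations T(a, m) (a fan at v_(a+1) and a fan at v_(a+m+1), optionally
   with the diagonal {v_a, v_(a+m)} added) are chordal and contain exactly the two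
   ears centred at v_(a+2) and v_(a+m+2).  An affine equation holding on all of
   them kills every chord of length 3 .. k-3 (toggle the diagonal) and gives all
   ears the same coefficient (compare m = 2 with m = k-3), so it is a multiple of
   the inequality and the face has dimension |E^c| - 1. *)

From mathcomp Require Import all_boot all_order all_algebra zify.
Set Implicit Arguments. Unset Strict Implicit. Unset Printing Implicit Defensive.

Import Order.TTheory GRing.Theory Num.Theory.

(** * Chordality from perfect elimination orderings *)

Section PerfectElimination.
Variables (T : finType) (adj : rel T).

Definition perfect_elimination (rk : T -> nat) :=
  forall v a b, adj a v -> adj v b -> a != b -> rk v <= rk a -> rk v <= rk b ->
  adj a b.

Lemma prev_next_neq (s : seq T) v : uniq s -> 4 <= size s -> v \in s ->
  [/\ prev s v != next s v, next s v != v & prev s v != next s (next s v)].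
Proof.
move=> s_uniq s_size /rot_to[i t rot_s].
rewrite -!(next_rot i s_uniq) -!(prev_rot i s_uniq) rot_s.
have : uniq (v :: t) by rewrite -rot_s rot_uniq.
have : 3 <= size t by rewrite -ltnS -[(size t).+1]/(size (v :: t)) -rot_s size_rot.
case: t {rot_s} => [|b [|c [|d t]]] // _ /andP[vt /andP[bt /andP[ct _]]].
have [vb vc] : v != b /\ v != c by move: vt; rewrite !inE !negb_or => /and3P[].
have -> : prev [:: v, b, c, d & t] v = last d t.
  rewrite prev_nth mem_head memNindex //.
  by rewrite -[size _]/((size [:: v, b, c, d & t]).-1) nth_last.
have -> : next [:: v, b, c, d & t] v = b by rewrite /= eqxx.
have -> : next [:: v, b, c, d & t] b = c by rewrite /= eq_sym (negbTE vb) eqxx.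
have lt_d := mem_last d t.
split; first by apply: contraNneq bt => <-; rewrite in_cons lt_d orbT.
  by rewrite eq_sym.
by apply: contraNneq ct => <-.
Qed.

Lemma perfect_elimination_chordal rk : perfect_elimination rk -> chordal adj.
Proof.
move=> rkP s s_uniq s_size s_cycle.
have [x0 x0s] : exists x, x \in s.
  by move: s_size; case: (s) => // x ? _; exists x; exact: mem_head.
case: (arg_minnP rk x0s) => v vs v_min.
have [ab bv a_nb] := prev_next_neq s_uniq s_size vs.
have a_in : prev s v \in s by rewrite mem_prev.
have b_in : next s v \in s by rewrite mem_next.
exists (prev s v), (next s v); split; rewrite ?next_prev //.
apply: (rkP v) => //; [exact: prev_cycle s_cycle vs | exact: next_cycle s_cycle vs
  | exact: v_min a_in | exact: v_min b_in].
Qed.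

End PerfectElimination.

Lemma eq_set2 (T : finType) (u v u' v' : T) : [set u; v] = [set u'; v'] ->
  (u = u' /\ v = v') \/ (u = v' /\ v = u').
Proof.
move=> E.
have : u \in [set u'; v'] by rewrite -E set21.
have : v \in [set u'; v'] by rewrite -E set22.
have : v' \in [set u; v] by rewrite E set22.
have : u' \in [set u; v] by rewrite E set21.
by move=> /set2P[] ? /set2P[] ? /set2P[] ? /set2P[] ?; subst; first [by left | by right].
Qed.

(** * Affine independence and rank *)

Lemma sum_mul_pred2 (R : pzSemiRingType) (I : finType) (F : I -> R) (g1 g2 : I) :
  g1 != g2 -> (\sum_i F i * ((i == g1) || (i == g2))%:R = F g1 + F g2)%R.
Proof.
move=> g12; rewrite (bigD1 g1) // eqxx mulr1 (bigD1 g2) /=; last by rewrite eq_sym.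
rewrite eqxx orbT mulr1 big1 ?addr0 // => i /andP[/negbTE-> /negbTE->].
by rewrite mulr0.
Qed.

Section AffineRank.
Variables (R : realFieldType) (k : nat).
Local Open Scope ring_scope.
Local Notation pt := {ffun Ec k -> R}.
Local Notation N := #|{: Ec k}|.

(* [hvec a0 a] is (a0, a) in R^(1 + |E^c|): a point y is lifted to [hvec 1 y],
   and [hvec a0 a] also encodes the affine functional y |-> a0 + a.y. *)
Definition hvec (a0 : R) (a : pt) : 'rV[R]_N.+1 :=
  \row_j (if unlift ord0 j is Some j' then a (enum_val j') else a0).

Definition hmx n (q : 'I_n -> pt) : 'M[R]_(n, N.+1) := \matrix_i hvec 1 (q i).

Lemma hvecK (v : 'rV[R]_N.+1) : hvec (v 0 ord0) [ffun f => v 0 (lift ord0 (enum_rank f))] = v.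
Proof.
by apply/rowP => j; rewrite mxE; case: unliftP => [j'|] ->; rewrite ?ffunE ?enum_valK.
Qed.

Lemma hvec_eq0 a0 a : hvec a0 a = 0 -> a0 = 0 /\ forall f, a f = 0.
Proof.
move/rowP => a_0; split; first by have := a_0 ord0; rewrite !mxE unlift_none.
by move=> f; have := a_0 (lift ord0 (enum_rank f)); rewrite !mxE liftK enum_rankK.
Qed.

Lemma hvec_mul_tr b0 b a0 a :
  (hvec b0 b *m (hvec a0 a)^T) 0 0 = b0 * a0 + \sum_f b f * a f.
Proof.
rewrite !mxE big_ord_recl !mxE unlift_none; congr (_ + _).
rewrite (eq_bigr (fun j => b (enum_val j) * a (enum_val j))) => [|j _].
  by rewrite -(big_enum_val (fun f => b f * a f)).
by rewrite !mxE liftK.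
Qed.

Lemma mul_hmx n (q : 'I_n -> pt) (v : 'rV[R]_n) :
  v *m hmx q = hvec (\sum_i v 0 i) [ffun f => \sum_i v 0 i * q i f].
Proof.
apply/rowP => j; rewrite !mxE; case: unliftP => [j'|] -> /=; rewrite ?ffunE;
  by apply: eq_bigr => i _; rewrite !mxE ?liftK ?unlift_none ?mulr1.
Qed.

Lemma aff_indepP n (q : 'I_n -> pt) : aff_indep q <-> row_free (hmx q).
Proof.
split=> [q_indep | q_free mu sum_mu sum_mu_q i].
  apply: inj_row_free => v; rewrite mul_hmx => /hvec_eq0[sum_v sum_vq].
  apply/rowP => i; rewrite mxE; apply: (q_indep (fun i => v 0 i)) => // f.
  by have := sum_vq f; rewrite ffunE.
pose v : 'rV[R]_n := \row_i mu i.
have : v *m hmx q = 0.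
  rewrite mul_hmx; apply/rowP => j; rewrite !mxE; case: unliftP => [j'|] _ /=; rewrite ?ffunE.
    by under eq_bigr do rewrite mxE; exact: sum_mu_q.
  by under eq_bigr do rewrite mxE; exact: sum_mu.
by move/eqP; rewrite mulmx_free_eq0 // => /eqP/rowP/(_ i); rewrite !mxE.
Qed.

Lemma hmx_hvec_tr n (q : 'I_n -> pt) a0 a i :
  (hmx q *m (hvec a0 a)^T) i 0 = a0 + \sum_f a f * q i f.
Proof.
have -> : (hmx q *m (hvec a0 a)^T) i 0 = row i (hmx q *m (hvec a0 a)^T) 0 0.
  by rewrite [RHS]mxE.
rewrite row_mul rowK hvec_mul_tr mul1r.
by congr (_ + _); apply: eq_bigr => f _; rewrite mulrC.
Qed.

Lemma aff_indep_le n (q : 'I_n -> pt) : aff_indep q -> (n <= N.+1)%N.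
Proof. by move/aff_indepP/eqP <-; exact: rank_leq_col. Qed.

Lemma aff_indep_hyperplane_le n (q : 'I_n -> pt) (c : pt) (b : R) : b != 0 ->
  (forall i, \sum_f c f * q i f = b) -> aff_indep q -> (n <= N)%N.
Proof.
move=> b_neq0 q_on /aff_indepP/eqP rank_q.
have normal_ker : hmx q *m (hvec (- b) c)^T = 0.
  by apply/colP => i; rewrite hmx_hvec_tr q_on mxE addNr.
have normal_neq0 : (hvec (- b) c)^T != 0.
  apply: contra_neq b_neq0 => /matrixP/(_ ord0 0).
  by rewrite !mxE unlift_none => /eqP; rewrite oppr_eq0 => /eqP.
have := mulmx0_rank_max normal_ker; rewrite rank_q.
by have := normal_neq0; rewrite -mxrank_eq0 -lt0n; lia.
Qed.

Lemma aff_indep_comp n n' (q : 'I_n -> pt) (h : 'I_n' -> 'I_n) :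
  injective h -> aff_indep q -> aff_indep (q \o h).
Proof.
move=> h_inj q_indep mu sum_mu sum_mu_q i.
pose mu' j := \sum_(i' | h i' == j) mu i'.
have mu'E F : \sum_j mu' j * F j = \sum_i mu i * F (h i).
  rewrite (partition_big h xpredT) //=; apply: eq_bigr => j _.
  by rewrite big_distrl; apply: eq_bigr => i' /eqP <-.
have mu'_0 : forall j, mu' j = 0.
  apply: q_indep => [|f]; last by rewrite mu'E.
  transitivity (\sum_j mu' j * 1); first by apply: eq_bigr => j _; rewrite mulr1.
  by rewrite mu'E -[RHS]sum_mu; apply: eq_bigr => i' _; rewrite mulr1.
rewrite -(mu'_0 (h i)) /mu' (eq_bigl (pred1 i)) ?big_pred1_eq // => i'.
by rewrite /= (inj_eq h_inj).
Qed.

Lemma aff_indep_extract (I : finType) (P : I -> pt) r (W : 'M[R]_(r, N.+1)) (n : nat) :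
  (forall a0 (a : pt), (forall i, a0 + \sum_f a f * P i f = 0) -> (hvec a0 a <= W)%MS) ->
  (n + \rank W <= N.+1)%N ->
  exists q : 'I_n -> pt, (forall i, exists j, q i = P j) /\ aff_indep q.
Proof.
move=> vanish_sub n_le; pose A := hmx (fun i : 'I_#|I| => P (enum_val i)).
have rank_A : (n <= \rank A)%N.
  suff /mxrankS : (kermx A^T <= W)%MS by rewrite mxrank_ker mxrank_tr; lia.
  apply/row_subP => l; set v := row l _.
  have vA : A *m v^T = 0.
    by apply: trmx_inj; rewrite trmx_mul trmxK trmx0 /v -row_mul mulmx_ker row0.
  rewrite -(hvecK v) in vA *; apply: vanish_sub => i.
  by move/matrixP/(_ (enum_rank i) 0): vA; rewrite hmx_hvec_tr enum_rankK => ->; rewrite mxE.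
pose g := maxrankfun A.
have g_indep : aff_indep (fun i => P (enum_val (g i))).
  apply/aff_indepP; have -> : hmx (fun i => P (enum_val (g i))) = rowsub g A.
    by apply/matrixP => i j; rewrite !mxE.
  exact: maxrowsub_free.
exists (fun i => P (enum_val (g (widen_ord rank_A i)))); split => [i|]; first by eexists.
by apply: (aff_indep_comp _ g_indep) => i j /(congr1 val) /= ij; apply: val_inj.
Qed.

End AffineRank.

Section CycleGraph.
Variable k : nat.
Hypothesis k_ge5 : 5 <= k.

Fact k_gt0 : 0 < k. Proof. exact: leq_trans k_ge5. Qed.

Definition vtx (t : nat) : 'I_k := Ordinal (ltn_pmod t k_gt0).

Lemma vtx_mod s t : s = t %[mod k] -> vtx s = vtx t.
Proof. by move=> st; apply: val_inj. Qed.

Lemma vtx_ord (u : 'I_k) : vtx u = u.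
Proof. by apply: val_inj; rewrite /= modn_small. Qed.

Lemma vtxE t : t < k + k -> vtx t = (if t < k then t else t - k) :> nat.
Proof.
move=> t_lt /=; case: ifP => [/modn_small //|/negbT]; rewrite -leqNgt => k_le.
by rewrite -{1}(subnK k_le) modnDr modn_small // ltn_subLR.
Qed.

Ltac vtx_norm := repeat (rewrite vtxE; last by lia).
Ltac case_ifs := repeat first
  [ case: ifP => ? | match goal with H : context[if _ then _ else _] |- _ => move: H end ].
Ltac split_bool := repeat match goal with
  | H : is_true (_ || _) |- _ => case/orP: H => H
  | H : is_true (_ && _) |- _ => let H' := fresh in case/andP: H => H' H
  | H : is_true (?x == ?y) |- _ => move/eqP: H => H; subst x
  end.

(* Adjacency and distance 2 on the cycle, for vertices given by their positions
   p, q < k counted from some base vertex (see [cyc_adj_vtx] and [dC2_vtx]). *)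
Definition cyc_adjn (p q : nat) :=
  [|| q == p.+1, p == q.+1, (p == k.-1) && (q == 0) | (q == k.-1) && (p == 0)].

Definition dist2n (p q : nat) :=
  [|| q == p + 2, p == q + 2, q + k == p + 2 | p + k == q + 2].

Lemma cyc_adjE (u v : 'I_k) : cyc_adj u v = cyc_adjn u v.
Proof.
have succE (w : 'I_k) : w.+1 %% k = if w.+1 < k then w.+1 else 0.
  case: (ltnP w.+1 k) => [/modn_small // | w_ge].
  have -> : w.+1 = k by have := ltn_ord w; lia.
  by rewrite modnn.
rewrite /cyc_adj /cyc_adjn !succE; have := ltn_ord u; have := ltn_ord v.
case_ifs; lia.
Qed.

Section Positions.
Variable a : nat.
Hypothesis a_lt : a < k.

Definition pos (u : 'I_k) : nat := (u + k - a) %% k.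

Lemma pos_lt u : pos u < k. Proof. exact: ltn_pmod _ k_gt0. Qed.

Lemma vtx_pos u : vtx (a + pos u) = u.
Proof.
rewrite -[RHS]vtx_ord; apply: vtx_mod; rewrite /pos modnDmr.
have -> : a + (u + k - a) = u + k by lia.
by rewrite modnDr.
Qed.

Lemma pos_vtx p : p < k -> pos (vtx (a + p)) = p.
Proof.
move=> p_lt; rewrite /pos vtxE; last by lia.
case: ifP => /= ap_lt.
  by rewrite (_ : _ - a = p + k) ?modnDr ?modn_small //; lia.
by rewrite (_ : _ - a = p) ?modn_small //; move/negbT: ap_lt; lia.
Qed.

Lemma eq_vtx p q : p < k -> q < k -> (vtx (a + p) == vtx (a + q)) = (p == q).
Proof.
move=> p_lt q_lt; apply/eqP/eqP => [/(congr1 pos)|-> //].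
by rewrite !pos_vtx.
Qed.

Lemma cyc_adj_vtx p q : p < k -> q < k ->
  cyc_adj (vtx (a + p)) (vtx (a + q)) = cyc_adjn p q.
Proof.
move=> p_lt q_lt; rewrite cyc_adjE /cyc_adjn; vtx_norm; case_ifs; lia.
Qed.

Lemma dC2_vtx p q : p < k -> q < k ->
  (dC (vtx (a + p)) (vtx (a + q)) == 2) = dist2n p q.
Proof.
move=> p_lt q_lt; rewrite /dC /dist2n; vtx_norm; case_ifs; lia.
Qed.

End Positions.

Lemma dC_sym (u v : 'I_k) : dC u v = dC v u.
Proof. by rewrite /dC; case: ltngtP => uv; rewrite ?minnn //; lia. Qed.

Lemma EcSet_pair (u v : 'I_k) : u != v -> ~~ cyc_adj u v -> [set u; v] \in EcSet k.
Proof.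
move=> uv nuv; rewrite inE; apply/existsP; exists u; apply/existsP; exists v.
by rewrite uv eqxx.
Qed.

Fact EcSet02 : [set vtx 0; vtx 2] \in EcSet k.
Proof.
apply: (@EcSet_pair (vtx (0 + 0)) (vtx (0 + 2))).
  by rewrite eq_vtx //; lia.
by rewrite cyc_adj_vtx /cyc_adjn //; lia.
Qed.

Definition chord0 : Ec k := exist (fun e => e \in EcSet k) _ EcSet02.

(* A junk default when u = v or u, v are adjacent. *)
Definition chord (u v : 'I_k) : Ec k := insubd chord0 [set u; v].

Lemma chordE u v : u != v -> ~~ cyc_adj u v -> val (chord u v) = [set u; v].
Proof. by move=> uv nuv; rewrite insubdK // EcSet_pair. Qed.

Lemma chordC u v : chord u v = chord v u.
Proof. by rewrite /chord setUC. Qed.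

Lemma chordP (f : Ec k) : exists u v, [/\ u != v, ~~ cyc_adj u v & f = chord u v].
Proof.
case: f => e e_in; have := e_in; rewrite inE.
move=> /existsP[u /existsP[v /and3P[uv /eqP e_uv nuv]]].
by exists u, v; split => //; apply: val_inj; rewrite chordE.
Qed.

Lemma eq_chord u v u' v' : u != v -> ~~ cyc_adj u v -> u' != v' -> ~~ cyc_adj u' v' ->
  (chord u v == chord u' v') = ((u == u') && (v == v')) || ((u == v') && (v == u')).
Proof.
move=> uv nuv uv' nuv'; apply/eqP/idP => [/(congr1 val)|].
  by rewrite !chordE // => /eq_set2[[-> ->]|[-> ->]]; rewrite !eqxx ?orbT.
by case/orP=> /andP[/eqP-> /eqP->]; rewrite // chordC.
Qed.

Lemma adjxE (x : {ffun Ec k -> bool}) (u v : 'I_k) :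
  adjx x u v = (u != v) && (cyc_adj u v || x (chord u v)).
Proof.
rewrite /adjx; case: (eqVneq u v) => //= uv; case: (boolP (cyc_adj u v)) => //= nuv.
apply/existsP/idP => [[f /andP[/eqP f_uv]]|x_uv].
  by have -> : chord u v = f by apply: val_inj; rewrite chordE.
by exists (chord u v); rewrite chordE // eqxx.
Qed.

Lemma adjxC (x : {ffun Ec k -> bool}) (u v : 'I_k) : adjx x u v = adjx x v u.
Proof.
rewrite !adjxE [v == u]eq_sym [chord v u]chordC; congr (_ && (_ || _)).
by rewrite /cyc_adj orbC.
Qed.

Lemma dist2_chord (u v : 'I_k) : u != v -> ~~ cyc_adj u v -> dist2 (chord u v) = (dC u v == 2).
Proof.
move=> uv nuv; apply/existsP/idP => [[u' /existsP[v' /andP[/eqP]]]|d_uv].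
  by rewrite chordE // => /eq_set2[[-> ->]|[-> ->]]; rewrite // dC_sym.
by exists u; apply/existsP; exists v; rewrite chordE // eqxx.
Qed.

Definition chord_at (a l : nat) : Ec k := chord (vtx a) (vtx (a + l)).

Lemma chord_at_mod a a' l : a = a' %[mod k] -> chord_at a l = chord_at a' l.
Proof.
move=> aa'; rewrite /chord_at (vtx_mod aa') (@vtx_mod (a + l) (a' + l)) //.
by rewrite -modnDml aa' modnDml.
Qed.

Lemma chord_at_compl a l : l <= k -> chord_at a l = chord_at (a + l) (k - l).
Proof.
move=> l_le; rewrite /chord_at chordC; congr chord; apply: vtx_mod.
by rewrite -addnA subnKC // modnDr.
Qed.

Lemma eq_vtx_mod s t : (vtx s == vtx t) = (s == t %[mod k]).
Proof. by []. Qed.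

Lemma vtx_shift a l : vtx a = vtx (a %% k + 0) /\ vtx (a + l) = vtx (a %% k + l).
Proof. by split; apply: vtx_mod; rewrite ?addn0 ?modnDml ?modn_mod. Qed.

Lemma chord_at_nondeg a l : 2 <= l <= k - 2 ->
  vtx a != vtx (a + l) /\ ~~ cyc_adj (vtx a) (vtx (a + l)).
Proof.
move=> l_range; have a_lt : a %% k < k := ltn_pmod _ k_gt0.
have [-> ->] := vtx_shift a l.
by rewrite eq_vtx ?cyc_adj_vtx /cyc_adjn //; lia.
Qed.

Lemma adjx_chord_at (x : {ffun Ec k -> bool}) a l : 2 <= l <= k - 2 ->
  adjx x (vtx a) (vtx (a + l)) = x (chord_at a l).
Proof. by move=> /(chord_at_nondeg a)[al nal]; rewrite adjxE al (negbTE nal). Qed.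

Lemma dist2_chord_at a l : 2 <= l <= k - 2 -> dist2 (chord_at a l) = (l == 2) || (l == k - 2).
Proof.
move=> l_range; have [al nal] := chord_at_nondeg a l_range.
have a_lt : a %% k < k := ltn_pmod _ k_gt0.
rewrite dist2_chord //; have [-> ->] := vtx_shift a l.
by rewrite dC2_vtx /dist2n //; lia.
Qed.

Lemma chord_atP (f : Ec k) : exists a l, [/\ a < k, 2 <= l <= k - 2 & f = chord_at a l].
Proof.
have [u [v [uv nuv ->]]] := chordP f; have u_lt := ltn_ord u.
have p_lt := pos_lt u v; have k0 := k_gt0.
have u0 : vtx (u + 0) = u by rewrite addn0 vtx_ord.
have up : vtx (u + pos u v) = v := vtx_pos u_lt v.
have := nuv; rewrite -{1}u0 -up cyc_adj_vtx // /cyc_adjn => nadj.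
have p0 : pos u v != 0 by apply: contraNneq uv => p0; rewrite -up p0 u0.
by exists u, (pos u v); split; [| lia | rewrite /chord_at up vtx_ord].
Qed.

Lemma eq_chord_at2 c c' : (chord_at c 2 == chord_at c' 2) = (c == c' %[mod k]).
Proof.
have two : 2 <= 2 <= k - 2 by lia.
have [cc ncc] := chord_at_nondeg c two; have [cc' ncc'] := chord_at_nondeg c' two.
rewrite eq_chord // !eq_vtx_mod eqn_modDr andbb.
case: (c == c' %[mod k]) => //=; apply/andP => -[/eqP e1 /eqP e2].
have : c' + 4 = c' + 0 %[mod k].
  by rewrite addn0 -e2 -[(c + 2) %% k]modnDml e1 modnDml -addnA.
by move/eqP; rewrite eqn_modDl mod0n modn_small //; lia.
Qed.

Lemma dist2P (f : Ec k) : dist2 f -> exists2 c, c < k & f = chord_at c 2.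
Proof.
have [a [l [a_lt l_range ->]]] := chord_atP f.
rewrite dist2_chord_at // => /orP[/eqP-> | /eqP l_eq]; first by exists a.
exists ((a + l) %% k); first exact: ltn_pmod _ k_gt0.
rewrite (@chord_at_compl a l); last by lia.
have -> : k - l = 2 by lia.
by apply: chord_at_mod; rewrite modn_mod.
Qed.

Lemma chord_vtxP a (f : Ec k) : a < k -> exists p q,
  [/\ p < k, q < k, p != q, ~~ cyc_adjn p q & f = chord (vtx (a + p)) (vtx (a + q))].
Proof.
move=> a_lt; have [u [v [uv nuv ->]]] := chordP f.
exists (pos a u), (pos a v); rewrite !vtx_pos // !pos_lt.
by rewrite -(eq_vtx a_lt) -?(cyc_adj_vtx a_lt) ?pos_lt // !vtx_pos.
Qed.

(** * Every chordal completion contains two ears *)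

Section Arc.
Variables (x : {ffun Ec k -> bool}) (a : nat).
Hypothesis a_lt : a < k.

Lemma adjx_cyc p q : p < k -> q < k -> p != q -> cyc_adjn p q ->
  adjx x (vtx (a + p)) (vtx (a + q)).
Proof. by move=> p_lt q_lt pq pq_adj; rewrite adjxE eq_vtx ?cyc_adj_vtx ?pq ?pq_adj. Qed.

Definition arc i n := [seq vtx (a + t) | t <- iota i n.+1].

Lemma arc_uniq i n : i + n < k -> uniq (arc i n).
Proof.
move=> arc_lt; rewrite map_inj_in_uniq ?iota_uniq // => p q.
rewrite !mem_iota => p_in q_in pq.
by apply/eqP; rewrite -(eq_vtx a_lt) ?pq //; lia.
Qed.

Lemma next_arc i n t : i + n < k -> i <= t <= i + n ->
  next (arc i n) (vtx (a + t)) = vtx (a + (if t < i + n then t.+1 else i)).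
Proof.
move=> arc_lt t_in; have size_arc : size (arc i n) = n.+1 by rewrite size_map size_iota.
have -> : vtx (a + t) = nth (vtx (a + i)) (arc i n) (t - i).
  by rewrite (nth_map 0) ?nth_iota ?size_iota ?subnKC //; lia.
rewrite next_nth mem_nth ?size_arc; last by lia.
rewrite index_uniq ?size_arc ?arc_uniq //; last by lia.
rewrite /arc /=; case: ifP => t_lt.
  by rewrite (nth_map 0) ?nth_iota ?size_iota; try congr vtx; lia.
by rewrite nth_default // size_map size_iota; lia.
Qed.

Lemma arc_cycle i n : i + n < k -> adjx x (vtx (a + i)) (vtx (a + (i + n))) ->
  cycle (adjx x) (arc i n).
Proof.
move=> arc_lt closing.
apply: cycle_from_next => [|_ /mapP[t t_in ->]]; first exact: arc_uniq.
rewrite mem_iota in t_in; rewrite next_arc //; last by lia.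
case: ifP => t_lt; first by apply: adjx_cyc; rewrite /cyc_adjn; lia.
by rewrite adjxC (_ : t = i + n) //; lia.
Qed.

Lemma arc_ear : chordal (adjx x) -> forall n i, i + n < k -> 2 <= n ->
  adjx x (vtx (a + i)) (vtx (a + (i + n))) ->
  exists2 s, i <= s <= i + n - 2 & adjx x (vtx (a + s)) (vtx (a + (s + 2))).
Proof.
move=> x_chordal; elim/ltn_ind => n IH i arc_lt n_ge2 closing.
have [n2 | n_gt2] := eqVneq n 2; first by exists i; rewrite -?n2 //; lia.
have arc_size : 4 <= size (arc i n) by rewrite size_map size_iota; lia.
have [u [v [/mapP[p p_in ->] /mapP[q q_in ->] uv v_nu u_nv]]] :=
  x_chordal _ (arc_uniq arc_lt) arc_size (arc_cycle arc_lt closing).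
move: p_in q_in; rewrite !mem_iota => p_in q_in.
wlog pq : p q p_in q_in uv v_nu u_nv / p < q => [wlog_pq|].
  have [pq | qp | pq] := ltngtP p q; first exact: (wlog_pq p q).
    by apply: (wlog_pq q p) => //; rewrite adjxC.
  by move: uv; rewrite pq adjxE eqxx.
have q_ne : q != p.+1.
  move: v_nu; rewrite next_arc; [|lia|lia]; rewrite ifT; last by lia.
  by rewrite eq_vtx //; lia.
have shorter : q - p < n.
  case: (ltnP q (i + n)) => q_lt; first by lia.
  move: u_nv; rewrite next_arc; [|lia|lia]; rewrite ifF; last by lia.
  by rewrite eq_vtx //; lia.
have [|||s s_in ear] := IH (q - p) shorter p; try lia; first by rewrite subnKC // ltnW.
by exists s => //; lia.
Qed.

End Arc.

Lemma two_le_dist2_chords (x : {ffun Ec k -> bool}) : chordal (adjx x) ->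
  2 <= #|[pred f | dist2 f && x f]|.
Proof.
move=> x_chordal; have k0 := k_gt0; have two : 2 <= 2 <= k - 2 by lia.
have ear b : b < k ->
    exists2 s, s <= k - 3 & x (chord_at (b + s) 2).
  move=> b_lt; have [|||s s_in] := @arc_ear x b b_lt x_chordal k.-1 0; try lia.
    by apply: adjx_cyc => //; rewrite /cyc_adjn; lia.
  by rewrite addnA adjx_chord_at // => ear; exists s => //; lia.
have [s1 s1_le ear1] := ear 0 k0.
have [s2 s2_le ear2] := ear s1.+1 ltac:(lia).
have ears_neq : chord_at s1 2 != chord_at (s1.+1 + s2) 2.
  rewrite eq_chord_at2 (_ : s1.+1 + s2 = s1 + s2.+1); last by lia.
  by rewrite -{1}[s1]addn0 eqn_modDl mod0n modn_small //; lia.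
have sub : [set chord_at s1 2; chord_at (s1.+1 + s2) 2] \subset [pred f | dist2 f && x f].
  by apply/subsetP => f; rewrite !inE => /orP[] /eqP->; rewrite dist2_chord_at // eqxx.
by have := subset_leq_card sub; rewrite cards2 ears_neq.
Qed.

(** * Triangulations with exactly two ears *)

Section Triangulation.
Variables (a m : nat) (e : bool).
Hypotheses (a_lt : a < k) (m_range : 2 <= m <= k - 3) (e_m : e -> 3 <= m).

(* Positions p stand for v_(a+p): a fan from 1 to 3 .. m+1, a fan from m+1 to
   m+3 .. k-1 and 0, and, if e, the diagonal 0-m of the quadrilateral 0, 1, m, m+1. *)
Definition fan_chord p q :=
  ((p == 1) && (3 <= q <= m.+1)) || ((p == m.+1) && ((m + 3 <= q < k) || (q == 0))).

Definition tri_chord p q :=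
  [|| fan_chord p q, fan_chord q p, [&& e, p == 0 & q == m] | [&& e, q == 0 & p == m]].

Definition tri_adj p q := (p != q) && (cyc_adjn p q || tri_chord p q).

(* The elimination order 2, .., m-1, m+2, .., k-1, 0, 1, m, m+1; [tri_upper p r]
   says that r is a neighbour of p coming later in it. *)
Definition tri_rank p :=
  if p == 0 then k else if p == 1 then k.+1 else if p == m then k.+2
  else if p == m.+1 then k.+3 else p.

Definition tri_upper p r :=
  if p == 0 then [|| r == 1, r == m.+1 | e && (r == m)]
  else if p == 1 then (r == m) || (r == m.+1)
  else if p == m then r == m.+1
  else if p == m.+1 then false
  else if p < m then (r == p.+1) || (r == 1)
  else (r == (if p.+1 == k then 0 else p.+1)) || (r == m.+1).

Lemma tri_chordC p q : tri_chord p q = tri_chord q p.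
Proof. by rewrite /tri_chord; case: fan_chord; case: fan_chord; rewrite //= orbC. Qed.

Lemma tri_adjC p q : tri_adj p q = tri_adj q p.
Proof.
rewrite /tri_adj tri_chordC eq_sym; congr (_ && (_ || _)).
by rewrite /cyc_adjn; case: (q == p.+1); case: (p == q.+1); rewrite //= orbC.
Qed.

Lemma tri_rank_le p q : p < k -> q < k -> tri_rank p <= tri_rank q ->
  if p == 0 then [|| q == 0, q == 1, q == m | q == m.+1]
  else if p == 1 then [|| q == 1, q == m | q == m.+1]
  else if p == m then (q == m) || (q == m.+1)
  else if p == m.+1 then q == m.+1
  else [|| q == 0, q == 1, q == m, q == m.+1 | p <= q].
Proof. by rewrite /tri_rank => p_lt q_lt; case_ifs; lia. Qed.

Lemma tri_upper_of_adj p r : p < k -> r < k -> tri_adj p r -> tri_rank p <= tri_rank r ->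
  tri_upper p r.
Proof.
move=> p_lt r_lt adj_pr /(tri_rank_le p_lt r_lt); move: adj_pr.
case: e e_m => [/(_ isT) m_ge3|_];
  rewrite /tri_adj /tri_chord /fan_chord /cyc_adjn /tri_upper /=; case_ifs; move=> *; lia.
Qed.

Lemma tri_upper_clique p q r : p < k -> q < k -> r < k ->
  tri_upper p q -> tri_upper p r -> q != r -> tri_adj q r.
Proof.
move=> p_lt q_lt r_lt; case: e e_m => [/(_ isT) m_ge3|_]; rewrite /tri_upper.
all: case: (eqVneq p 0) => [_|p0]; [|case: (eqVneq p 1) => [_|p1];
  [|case: (eqVneq p m) => [_|pm]; [|case: (eqVneq p m.+1) => [_|pm1]]]] => /=.
all: case_ifs; move=> up_q up_r qr; split_bool.
all: rewrite /tri_adj /tri_chord /fan_chord /cyc_adjn /=; lia.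
Qed.

Definition tri : {ffun Ec k -> bool} :=
  [ffun f => [exists u, exists v, (val f == [set u; v]) && tri_chord (pos a u) (pos a v)]].

Lemma tri_chord_vtx p q : p < k -> q < k -> p != q -> ~~ cyc_adjn p q ->
  tri (chord (vtx (a + p)) (vtx (a + q))) = tri_chord p q.
Proof.
move=> p_lt q_lt pq npq.
have [uv nuv] : vtx (a + p) != vtx (a + q) /\ ~~ cyc_adj (vtx (a + p)) (vtx (a + q)).
  by rewrite eq_vtx ?cyc_adj_vtx.
rewrite ffunE chordE //; apply/existsP/idP => [[u /existsP[v /andP[/eqP/eq_set2]]]|tri_pq].
  by case=> [[<- <-]|[<- <-]]; rewrite !pos_vtx // tri_chordC.
by exists (vtx (a + p)); apply/existsP; exists (vtx (a + q)); rewrite !pos_vtx // eqxx.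
Qed.

Lemma adjx_tri p q : p < k -> q < k ->
  adjx tri (vtx (a + p)) (vtx (a + q)) = tri_adj p q.
Proof.
move=> p_lt q_lt; rewrite adjxE eq_vtx ?cyc_adj_vtx // /tri_adj.
case: (eqVneq p q) => //= pq; case: (boolP (cyc_adjn p q)) => //= npq.
by rewrite tri_chord_vtx.
Qed.

Lemma chordal_tri : chordal (adjx tri).
Proof.
apply: (@perfect_elimination_chordal _ _ (fun u => tri_rank (pos a u))) => v u w.
rewrite -(vtx_pos a_lt v) -(vtx_pos a_lt u) -(vtx_pos a_lt w) !adjx_tri ?pos_lt //.
rewrite eq_vtx ?pos_lt // !pos_vtx ?pos_lt // => uv vw uw uv_rank vw_rank.
apply: (@tri_upper_clique (pos a v)); rewrite ?pos_lt //.
all: by apply: tri_upper_of_adj; rewrite ?pos_lt // tri_adjC.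
Qed.

Lemma tri_ear p : p < k -> tri (chord_at (a + p) 2) = (p == 1) || (p == m.+1).
Proof.
move=> p_lt; set q := if p + 2 < k then p + 2 else p + 2 - k.
have q_lt : q < k by rewrite /q; case: ifP; lia.
have -> : chord_at (a + p) 2 = chord (vtx (a + p)) (vtx (a + q)).
  congr chord; apply: vtx_mod; rewrite /q; case: ifP => [_|/negbT]; first by rewrite addnA.
  by rewrite -leqNgt => ge; rewrite -[in RHS](modnDr _ k); congr (_ %% _); lia.
rewrite tri_chord_vtx //; last 2 first.
- by rewrite /q; case: ifP; lia.
- by rewrite /q /cyc_adjn; case: ifP; lia.
case: e e_m => [/(_ isT) m_ge3|_];
  rewrite /tri_chord /fan_chord /q; case: ifP; lia.
Qed.

Lemma dist2_tri (f : Ec k) :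
  dist2 f && tri f = (f == chord_at (a + 1) 2) || (f == chord_at (a + m.+1) 2).
Proof.
have two : 2 <= 2 <= k - 2 by lia.
case: (boolP (dist2 f)) => [/dist2P[c c_lt ->] | nd] /=.
  set p := pos a (vtx c); have p_lt : p < k := pos_lt a _.
  have c_mod : c = a + p %[mod k] by apply/eqP; rewrite -eq_vtx_mod vtx_pos.
  rewrite (chord_at_mod 2 c_mod) tri_ear // !eq_chord_at2 !eqn_modDl !modn_small //; lia.
by apply/esym/norP; split; apply: contraNneq nd => ->; rewrite dist2_chord_at ?eqxx.
Qed.

End Triangulation.

Lemma tri_ears_neq a m : 2 <= m <= k - 3 -> chord_at (a + 1) 2 != chord_at (a + m.+1) 2.
Proof. by move=> m_range; rewrite eq_chord_at2 eqn_modDl !modn_small //; lia. Qed.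

Section Toggle.
Variables (a m : nat).
Hypotheses (a_lt : a < k) (m_range : 3 <= m <= k - 3).

Lemma tri_toggle (f : Ec k) : tri a m true f = tri a m false f || (f == chord_at a m).
Proof.
have [p [q [p_lt q_lt pq npq ->]]] := chord_vtxP f a_lt.
have -> : chord_at a m = chord (vtx (a + 0)) (vtx (a + m)) by rewrite /chord_at addn0.
rewrite !tri_chord_vtx // eq_chord ?eq_vtx ?cyc_adj_vtx //; try by rewrite /cyc_adjn; lia.
rewrite /tri_chord /=.
by case: fan_chord; case: fan_chord; case: (p == 0); case: (q == m);
  case: (p == m); case: (q == 0).
Qed.

Lemma chord_at_notin_tri : ~~ tri a m false (chord_at a m).
Proof.
have -> : chord_at a m = chord (vtx (a + 0)) (vtx (a + m)) by rewrite /chord_at addn0.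
rewrite tri_chord_vtx /cyc_adjn //; try lia.
by rewrite /tri_chord /fan_chord /=; lia.
Qed.

End Toggle.

Section Polytope.
Variable R : realFieldType.
Local Open Scope ring_scope.
Local Notation pt := {ffun Ec k -> R}.
Local Notation N := #|{: Ec k}|.

Definition pt_of (x : {ffun Ec k -> bool}) : pt := [ffun f => (x f)%:R].

Lemma pt_ofE x f : pt_of x f = (x f)%:R.
Proof. exact: ffunE. Qed.

Definition dist2_vec : pt := [ffun f => (dist2 f)%:R].

Lemma lhsE (y : pt) : lhs y = \sum_f dist2_vec f * y f.
Proof.
rewrite /lhs big_mkcond; apply: eq_bigr => f _; rewrite ffunE.
by case: dist2; rewrite ?mul1r ?mul0r.
Qed.

Lemma lhs_pt_of x : lhs (pt_of x) = #|[pred f | dist2 f && x f]|%:R.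
Proof.
rewrite /lhs (eq_bigr (fun f => if x f then 1 else 0)); last first.
  by move=> f _; rewrite ffunE; case: (x f).
by rewrite -big_mkcondr sumr_const.
Qed.

Lemma XG_conv (y : pt) : XG y -> conv (@XG R k) y.
Proof.
move=> XGy; exists 1%N, (fun _ => 1), (fun _ => y).
by split=> [//|_|| f]; rewrite ?ler01 ?big_ord1 ?mul1r.
Qed.

Lemma conv_XG_valid : valid_ineq (conv (@XG R k)) (@lhs R k) 2%:R.
Proof.
move=> y [n [lam [q [q_XG lam_ge0 lam_sum y_eq]]]].
have -> : lhs y = \sum_i lam i * lhs (q i).
  rewrite lhsE; under eq_bigr do rewrite y_eq mulr_sumr.
  rewrite exchange_big; apply: eq_bigr => i _; rewrite lhsE mulr_sumr.
  by apply: eq_bigr => f _; rewrite mulrCA.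
have q_ge2 i : 2%:R <= lhs (q i).
  have [x [-> x_chordal]] := q_XG i.
  by rewrite lhs_pt_of ler_nat two_le_dist2_chords.
apply: le_trans (_ : \sum_i lam i * 2%:R <= _); first by rewrite -mulr_suml lam_sum mul1r.
by apply: ler_sum => i _; exact: ler_wpM2l (lam_ge0 i) _ _ (q_ge2 i).
Qed.

Lemma sum_tri (w : pt) a m (e : bool) : (a < k)%N -> (2 <= m <= k - 3)%N -> (e -> 3 <= m)%N ->
  (forall f, ~~ dist2 f -> w f = 0) ->
  \sum_f w f * pt_of (tri a m e) f = w (chord_at (a + 1) 2)%N + w (chord_at (a + m.+1) 2)%N.
Proof.
move=> a_lt m_range e_m w_off; rewrite -sum_mul_pred2; last exact: tri_ears_neq.
apply: eq_bigr => f _; rewrite pt_ofE -(dist2_tri a_lt m_range e_m).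
by case: (boolP (dist2 f)) => //= nd; rewrite w_off ?mul0r.
Qed.

Lemma sum_tri_toggle (w : pt) a m : (a < k)%N -> (3 <= m <= k - 3)%N ->
  \sum_f w f * pt_of (tri a m true) f =
  \sum_f w f * pt_of (tri a m false) f + w (chord_at a m).
Proof.
move=> a_lt m_range; rewrite (bigD1 (chord_at a m)) //= [in RHS](bigD1 (chord_at a m)) //=.
rewrite !pt_ofE tri_toggle // eqxx orbT.
rewrite (negbTE (chord_at_notin_tri a_lt m_range)) mulr1 mulr0 add0r addrC.
congr (_ + _); apply: eq_bigr => f f_neq.
by rewrite !pt_ofE tri_toggle // (negbTE f_neq) orbF.
Qed.

Lemma ear_sums_const (beta : nat -> R) (s : R) :
  (forall c c', c = c' %[mod k] -> beta c = beta c') ->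
  (forall a m, (a < k)%N -> (2 <= m <= k - 3)%N -> beta (a + 1)%N + beta (a + m.+1)%N = s) ->
  forall c, beta c = beta 0%N.
Proof.
move=> beta_mod beta_sum; have k0 := k_gt0.
have shift c : beta c = beta (c + k.-1)%N.
  (* The pairs (c - 2, 2) and (c, k - 3) share the term c + 2. *)
  pose a1 := ((c + k.-1) %% k)%N; pose a2 := (c.+1 %% k)%N.
  have s1 := beta_sum a1 2%N (ltn_pmod _ k0) ltac:(lia).
  have s2 := beta_sum a2 (k - 3)%N (ltn_pmod _ k0) ltac:(lia).
  rewrite (@beta_mod (a1 + 1)%N c) in s1; last first.
    by rewrite /a1 modnDml (_ : c + k.-1 + 1 = c + k)%N ?modnDr //; lia.
  rewrite (@beta_mod (a1 + 3)%N (c + 2)%N) in s1; last first.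
    by rewrite /a1 modnDml (_ : c + k.-1 + 3 = c + 2 + k)%N ?modnDr //; lia.
  rewrite (@beta_mod (a2 + 1)%N (c + 2)%N) in s2; last first.
    by rewrite /a2 modnDml; congr (_ %% _)%N; lia.
  rewrite (@beta_mod (a2 + (k - 3).+1)%N (c + k.-1)%N) in s2; last first.
    by rewrite /a2 modnDml; congr (_ %% _)%N; lia.
  by apply: (@addIr _ (beta (c + 2)%N)); rewrite s1 addrC s2.
elim=> // c IH; rewrite shift -IH; apply: beta_mod.
by rewrite (_ : c.+1 + k.-1 = c + k)%N ?modnDr //; lia.
Qed.

Definition tri_index :=
  {t : 'I_k * 'I_k * bool | (2 <= t.1.2 <= k - 3)%N && (t.2 ==> (3 <= t.1.2)%N)}.

Definition tri_pt (t : tri_index) : pt := pt_of (tri (val t).1.1 (val t).1.2 (val t).2).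

Lemma tri_affine_relations (w0 : R) (w : pt) :
  (forall t, w0 + \sum_f w f * tri_pt t f = 0) ->
  exists l, w0 = - (l * 2%:R) /\ forall f, w f = l * dist2_vec f.
Proof.
move=> w_vanish.
have rel a m (e : bool) : (a < k)%N -> (2 <= m <= k - 3)%N -> (e -> 3 <= m)%N ->
    w0 + \sum_f w f * pt_of (tri a m e) f = 0.
  move=> a_lt m_range e_m; have m_lt : (m < k)%N by lia.
  have t_ok : (2 <= m <= k - 3)%N && (e ==> (3 <= m)%N).
    by rewrite m_range; case: e e_m => // ->.
  exact: (w_vanish (exist _ (Ordinal a_lt, Ordinal m_lt, e) t_ok)).
have w_off f : ~~ dist2 f -> w f = 0.
  have [a [l [a_lt l_range ->]]] := chord_atP f.
  rewrite dist2_chord_at // => l_ne; have l_range' : (3 <= l <= k - 3)%N by lia.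
  have rel_f := rel a l false a_lt ltac:(lia) (fun no => ltac:(done)).
  have := rel a l true a_lt ltac:(lia) (fun _ => ltac:(lia)).
  by rewrite sum_tri_toggle // addrA rel_f add0r.
have ear_sum a m : (a < k)%N -> (2 <= m <= k - 3)%N ->
    w (chord_at (a + 1) 2)%N + w (chord_at (a + m.+1) 2)%N = - w0.
  move=> a_lt m_range; apply/eqP; rewrite -addr_eq0 addrC.
  by rewrite -(sum_tri (e := false) a_lt m_range) // rel.
have ear_const := @ear_sums_const (fun c => w (chord_at c 2%N)) _
  (fun c c' cc' => congr1 w (chord_at_mod 2%N cc')) ear_sum.
exists (w (chord_at 0 2)%N); split.
  have := ear_sum 0%N 2%N k_gt0 ltac:(lia).
  rewrite (ear_const (0 + 1)%N) (ear_const (0 + 3)%N) => two_ears.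
  by rewrite -[w0]opprK -two_ears mulr_natr mulr2n.
move=> f; rewrite ffunE; case: (boolP (dist2 f)) => [/dist2P[c _ ->]|nd].
  by rewrite mulr1; exact: ear_const.
by rewrite w_off // mulr0.
Qed.

Definition all_but (g : option (Ec k)) : {ffun Ec k -> bool} := [ffun f => Some f != g].

Lemma chordal_all_but g : chordal (adjx (all_but g)).
Proof.
case: g => [g0|]; last first.
  apply: (@perfect_elimination_chordal _ _ (fun=> 0%N)) => v a b _ _ ab _ _.
  by rewrite adjxE ab ffunE orbT.
have [u0 [v0 [u0v0 nu0v0 ->]]] := chordP g0.
apply: (@perfect_elimination_chordal _ _ (fun u => nat_of_bool (u != u0))) => v a b.
rewrite !adjxE => /andP[av _] /andP[vb _] ab a_rank b_rank.
rewrite ab /=; case: (boolP (cyc_adj a b)) => //= nab.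
rewrite ffunE (inj_eq (@Some_inj _)) eq_chord //.
apply/negP => /orP[] /andP[/eqP ea /eqP eb]; subst a b.
  by move: a_rank; rewrite eqxx leqn0 eqb0 negbK => /eqP v_eq; rewrite v_eq eqxx in av.
by move: b_rank; rewrite eqxx leqn0 eqb0 negbK => /eqP v_eq; rewrite v_eq eqxx in vb.
Qed.

Lemma all_but_affine_relations (w0 : R) (w : pt) :
  (forall g, w0 + \sum_f w f * pt_of (all_but g) f = 0) -> w0 = 0 /\ forall f, w f = 0.
Proof.
move=> w_vanish.
have sum_all_but g : \sum_f w f * pt_of (all_but (Some g)) f + w g =
                \sum_f w f * pt_of (all_but None) f.
  rewrite (bigD1 g) //= [in RHS](bigD1 g) //= !pt_ofE !ffunE eqxx /= mulr0 mulr1 add0r addrC.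
  congr (_ + _); apply: eq_bigr => f f_neq.
  by rewrite !pt_ofE !ffunE /= (inj_eq (@Some_inj _)) f_neq.
have w_0 g : w g = 0.
  by have := w_vanish None; rewrite -(sum_all_but g) addrA w_vanish add0r.
split=> //; have := w_vanish None.
by rewrite big1 ?addr0 // => f _; rewrite w_0 mul0r.
Qed.

Lemma card_Ec_gt0 : (0 < N)%N.
Proof. by apply/card_gt0P; exists (chord_at 0 2)%N. Qed.

Lemma has_dim_conv_XG : has_dim (conv (@XG R k)) N.
Proof.
split=> [|q _ /aff_indep_le]; last by rewrite ltnn.
have [q [q_all_but q_indep]] :
    exists q : 'I_N.+1 -> pt, (forall i, exists g, q i = pt_of (all_but g)) /\ aff_indep q.
  apply: (@aff_indep_extract _ _ _ _ _ (0 : 'M_N.+1)); last by rewrite mxrank0 addn0.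
  move=> w0 w /all_but_affine_relations[w0_0 w_0]; rewrite submx0; apply/eqP/rowP => j.
  by rewrite !mxE; case: unlift => [j'|]; rewrite ?w_0.
exists q; split=> // i; have [g ->] := q_all_but i.
by apply: XG_conv; exists (all_but g); split=> //; exact: chordal_all_but.
Qed.

Lemma tri_pt_on_face t : XG (tri_pt t) /\ lhs (tri_pt t) = 2%:R.
Proof.
case: t => [[[a m] e] t_ok]; have /andP[m_range e_m] := t_ok; rewrite /tri_pt /=.
have e_m' : e -> (3 <= m)%N by move=> e_true; rewrite e_true in e_m.
split; first by exists (tri a m e); split=> //; apply: chordal_tri.
rewrite lhsE sum_tri // => [|f nd]; last by rewrite ffunE (negbTE nd).
rewrite !ffunE !dist2_chord_at ?eqxx; try lia.
by rewrite /= -natrD.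
Qed.

Lemma has_dim_face : has_dim (fun y => conv (@XG R k) y /\ lhs y = 2%:R) N.-1.
Proof.
have N_gt0 := card_Ec_gt0.
split=> [|q q_face]; last first.
  have two_neq0 : 2%:R != 0 :> R by rewrite pnatr_eq0.
  move/(aff_indep_hyperplane_le two_neq0) => /(_ dist2_vec) N_le.
  have : (N.-1.+2 <= N)%N by apply: N_le => i; rewrite -lhsE; case: (q_face i).
  by rewrite prednK // ltnn.
have [q [q_tri q_indep]] :
    exists q : 'I_N.-1.+1 -> pt, (forall i, exists t, q i = tri_pt t) /\ aff_indep q.
  apply: (@aff_indep_extract _ _ _ _ _ (hvec (- 2%:R) dist2_vec)).
    move=> w0 w /tri_affine_relations[l [-> w_l]].
    have -> : hvec (- (l * 2%:R)) w = l *: hvec (- 2%:R) dist2_vec.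
      by apply/rowP => j; rewrite !mxE; case: unlift => [j'|]; rewrite ?w_l ?mulrN.
    exact: scalemx_sub (submx_refl _).
  by rewrite prednK //; have := rank_leq_row (hvec (- 2%:R) dist2_vec); lia.
exists q; split=> // i; have [t ->] := q_tri i; have [XG_t lhs_t] := tri_pt_on_face t.
by split=> //; exact: XG_conv.
Qed.

End Polytope.

End CycleGraph.

Local Open Scope ring_scope.

Theorem proposition4 (R : realFieldType) (k : nat) (hk : (5 <= k)%N) :
  facet_defining (conv (@XG R k)) (@lhs R k) 2%:R.
Proof.
split; first exact: conv_XG_valid hk R.
exists #|{: Ec k}|.-1; rewrite prednK ?(card_Ec_gt0 hk) //.
by split; [exact: has_dim_conv_XG hk R | exact: has_dim_face hk R].
Qed.
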